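(* Let $G=(V=V_0\uplus V_1,v_{\mathsf{init}},E,\gamma)$ be a quantitative graph game, let $\mu>0$ be the maximum of the absolute values of the costs along transitions, and let $d=\frac pq>1$ be the discount factor with $p,q$ positive integers. Then for all $(v,w)\in E$ and all $k>0$, \[\mathsf{cost}_k(v,w)=\frac{q^{k-1}n_1+q^{k-2}p\,n_2+\cdots+p^{k-1}n_k}{p^{k-1}}\] for some integers $n_1,\dots,n_k$ with $|n_i|\le\mu$ for all $i\in\{1,\dots,k\}$.
   Context: A quantitative graph game $G=(V=V_0\uplus V_1, v_{\mathsf{init}},E,\gamma)$ consists of a finite directed graph $(V,E)$ in which every state has at least one outgoing edge, a partition of $V$ into $V_0$ (maximizing player) and $V_1$ (minimizing player), an initial state, and an integer cost function $\gamma:E\to\mathbb{Z}$. Value iteration defines $\mathit{wt}_1(v)=\max\{\gamma(v,w):(v,w)\in E\}$ for $v\in V_0$ ($\min$ for $v\in V_1$) and $\mathit{wt}_{k+1}(v)=\max\{\gamma(v,w)+\frac1d\mathit{wt}_k(w):(v,w)\in E\}$ for $v\in V_0$ ($\min$ for $v\in V_1$). The transition costs are $\mathsf{cost}_1(v,w)=\gamma(v,w)$ and $\mathsf{cost}_k(v,w)=\gamma(v,w)+\frac1d\mathit{wt}_{k-1}(w)$ for $k>1$, so that $\mathit{wt}_k(v)$ is the max (for $v\in V_0$) or min (for $v\in V_1$) of $\mathsf{cost}_k(v,w)$ over $(v,w)\in E$. *)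

(* Values are rationals since d = p/q is rational. *)
From mathcomp Require Import all_boot all_order all_algebra.
Set Implicit Arguments. Unset Strict Implicit. Unset Printing Implicit Defensive.
Import Order.TTheory GRing.Theory Num.Theory.
Local Open Scope ring_scope.

Section Game.
Variables (V : finType) (V0 : {set V}) (E : rel V) (gamma : V -> V -> int)
          (d : rat).

Definition succs (v : V) : seq V := [seq w <- enum V | E v w].

Definition maxl (s : seq rat) : rat := foldr Num.max (head 0 s) s.
Definition minl (s : seq rat) : rat := foldr Num.min (head 0 s) s.

Definition opt (v : V) (s : seq rat) : rat :=
  if v \in V0 then maxl s else minl s.

(* value iteration: wt k v = wt_k(v) for k >= 1 ; wt 0 is an unused dummy *)
Fixpoint wt (k : nat) (v : V) : rat :=
  match k with
  | 0 => 0
  | k'.+1 =>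
      match k' with
      | 0 => opt v [seq (gamma v w)%:~R | w <- succs v]
      | _ => opt v [seq (gamma v w)%:~R + wt k' w / d | w <- succs v]
      end
  end.

Definition cost (k : nat) (v w : V) : rat :=
  if k == 1%N then (gamma v w)%:~R else (gamma v w)%:~R + wt k.-1 w / d.

Definition mu : nat := \max_(v : V) \max_(w : V | E v w) `|gamma v w|%N.

End Game.

(** Unfolding one step, [cost_(k+1)(v,w) = gamma(v,w) + cost_k(w,w')/d] for a
    successor [w'] realising the optimum [wt_k(w)]. Dividing by [d = p/q]
    multiplies every earlier coefficient by [q] and the denominator by [p],
    while the new digit [gamma(v,w)] enters with coefficient [p^k]; so by
    induction [cost_k(v,w)] is the stated fraction, its digits being
    transition costs and hence bounded by [mu]. *)

From mathcomp Require Import all_boot all_order all_algebra.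
From mathcomp Require Import ring.
Set Implicit Arguments. Unset Strict Implicit. Unset Printing Implicit Defensive.
Import Order.TTheory GRing.Theory Num.Theory.
Local Open Scope ring_scope.

Lemma foldr_selective_mem (T : eqType) (op : T -> T -> T) (x : T) (s : seq T) :
  (forall a b, op a b = a \/ op a b = b) -> x \in s -> foldr op x s \in s.
Proof.
move=> op_sel xs; rewrite foldrE big_seq.
by apply: (big_ind (fun y => y \in s)) => // a b; case: (op_sel a b) => ->.
Qed.

Lemma opt_mem (V : finType) (V0 : {set V}) (v : V) (s : seq rat) :
  s != [::] -> opt V0 v s \in s.
Proof.
case: s => // x s _; rewrite /opt /maxl /minl.
case: ifP => _; apply: foldr_selective_mem; rewrite ?mem_head // => a b.
- by rewrite maxEle; case: ifP; [right | left].
- by rewrite minEle; case: ifP; [left | right].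
Qed.

Definition pq_frac (R : numFieldType) (p q k : nat) (n : 'I_k -> int) : R :=
  (\sum_(i < k) ((q ^ (k.-1 - i) * p ^ i)%N)%:R * (n i)%:~R) / (p ^ k.-1)%:R.

Definition snoc_fun (T : Type) k (f : 'I_k -> T) (x : T) (i : 'I_k.+1) : T :=
  oapp f x (unlift ord_max i).

Lemma snoc_fun_max (T : Type) k (f : 'I_k -> T) x : snoc_fun f x ord_max = x.
Proof. by rewrite /snoc_fun unlift_none. Qed.

Lemma snoc_fun_widen (T : Type) k (f : 'I_k -> T) x i :
  snoc_fun f x (widen_ord (leqnSn k) i) = f i.
Proof.
have -> : widen_ord (leqnSn k) i = lift ord_max i.
  by apply/val_inj; exact: (esym (lift_max i)).
by rewrite /snoc_fun liftK.
Qed.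

Lemma pq_frac_snoc (R : numFieldType) (p q k : nat) (n : 'I_k.+1 -> int) g :
  (0 < p)%N -> (0 < q)%N ->
  pq_frac R p q (snoc_fun n g) = g%:~R + pq_frac R p q n / (p%:R / q%:R).
Proof.
move=> p_gt0 q_gt0.
have p0 : (p%:R : R) != 0 by rewrite pnatr_eq0 -lt0n.
have q0 : (q%:R : R) != 0 by rewrite pnatr_eq0 -lt0n.
have pk0 : ((p ^ k)%N%:R : R) != 0 by rewrite pnatr_eq0 -lt0n expn_gt0 p_gt0.
rewrite /pq_frac big_ord_recr /= subnn expn0 mul1n snoc_fun_max.
have -> : \sum_(i < k.+1) ((q ^ (k.+1 - i) * p ^ i)%N)%:R *
            (snoc_fun n g (widen_ord (leqnSn k.+1) i))%:~R
          = q%:R * \sum_(i < k.+1) ((q ^ (k - i) * p ^ i)%N)%:R * (n i)%:~R :> R.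
  rewrite mulr_sumr; apply: eq_bigr => i _.
  by rewrite snoc_fun_widen subSn -1?ltnS // expnS !natrM !mulrA.
rewrite expnS natrM.
by field; rewrite pk0 p0 q0.
Qed.

Section ValueIteration.
Variables (V : finType) (V0 : {set V}) (E : rel V) (gamma : V -> V -> int).

Lemma abs_gamma_le_mu v w : E v w -> (`|gamma v w| <= mu E gamma)%N.
Proof.
move=> Evw; apply: leq_trans (leq_bigmax v).
exact: (leq_bigmax_cond (F := fun w => `|gamma v w|%N) w Evw).
Qed.

Lemma wt_opt_cost (d : rat) k v :
  wt V0 E gamma d k.+1 v =
  opt V0 v [seq cost V0 E gamma d k.+1 v w | w <- succs E v].
Proof. by case: k. Qed.

Hypothesis E_total : forall v : V, exists w : V, E v w.

Lemma succs_neq0 v : succs E v != [::].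
Proof.
have [w Evw] := E_total v; apply/eqP => succs_nil.
have : w \in succs E v by rewrite mem_filter Evw mem_enum.
by rewrite succs_nil.
Qed.

Lemma wt_attained (d : rat) k v :
  exists2 w, E v w & wt V0 E gamma d k.+1 v = cost V0 E gamma d k.+1 v w.
Proof.
rewrite wt_opt_cost.
have /mapP[w] : opt V0 v (map (cost V0 E gamma d k.+1 v) (succs E v))
                 \in map (cost V0 E gamma d k.+1 v) (succs E v).
  by apply: opt_mem; rewrite -size_eq0 size_map size_eq0 succs_neq0.
by rewrite mem_filter => /andP[Evw _] opt_eq; exists w.
Qed.

Lemma cost_pq_frac (p q : nat) (p_gt0 : (0 < p)%N) (q_gt0 : (0 < q)%N) k v w :
  E v w ->
  exists n : 'I_k.+1 -> int,
    (forall i, (`|n i| <= mu E gamma)%N) /\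
    cost V0 E gamma (p%:R / q%:R) k.+1 v w = pq_frac rat p q n.
Proof.
elim: k v w => [|k IH] v w Evw.
  exists (fun=> gamma v w); split => [_|]; first exact: abs_gamma_le_mu.
  by rewrite /pq_frac big_ord1 /= expn0 !mul1n divr1 mul1r.
have [w' Eww' wt_w] := wt_attained (p%:R / q%:R) k w.
have [m [m_le_mu cost_ww']] := IH w w' Eww'.
exists (snoc_fun m (gamma v w)); split.
  move=> i; rewrite /snoc_fun; case: unliftP => [j _|_] /=.
  - exact: m_le_mu.
  - exact: abs_gamma_le_mu.
by rewrite pq_frac_snoc // -cost_ww' -wt_w.
Qed.

End ValueIteration.

Theorem lemma4 (V : finType) (V0 : {set V}) (v_init : V) (E : rel V)
    (gamma : V -> V -> int)
    (hE : forall v : V, exists w : V, E v w)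
    (hmu : (0 < mu E gamma)%N)
    (p q : nat) (hp : (0 < p)%N) (hq : (0 < q)%N) (hd : (q < p)%N) :
  forall (v w : V), E v w -> forall k : nat, (0 < k)%N ->
    exists n : 'I_k -> int,
      (forall i : 'I_k, (`|n i| <= mu E gamma)%N) /\
      cost V0 E gamma (p%:R / q%:R) k v w =
        (\sum_(i < k) ((q ^ (k.-1 - i) * p ^ i)%N)%:R * (n i)%:~R)
          / (p ^ k.-1)%:R.
Proof.
move=> v w Evw [//|k] _.
exact: (cost_pq_frac V0 gamma hE hp hq k Evw).
Qed.
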